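(* Let $n\ge2$, $p\in S_k$, and $\pi:\{1,\dots,k\}\to\{1,\dots,n\}$. Suppose there exist $i<j$ with $p_i>p_j$ and $\pi(i)\le\pi(j)$. Then no $w\in\widetilde{S}_n$ contains an instance of $p$ with strand assignment $\pi$.
   Context: An affine permutation of size $n$ is a bijection $w:\mathbb{Z}\to\mathbb{Z}$ with $w(i+n)=w(i)+n$ for all $i$ and $w(1)+\cdots+w(n)=\binom{n+1}{2}$; $\widetilde{S}_n$ is the group of these. For $p\in S_k$, an instance of $p$ in $w$ is a sequence of integers $i_1<\cdots<i_k$ such that $w(i_1),\dots,w(i_k)$ are in the same relative order as $p_1,\dots,p_k$; $w$ contains $p$ if such an instance exists. The strand assignment of an instance is the function $\pi:\{1,\dots,k\}\to\{1,\dots,n\}$ with $\pi(m)=j$ iff $i_m\equiv q\pmod n$, where $q\in\{1,\dots,n\}$ is the position such that $w(q)$ is the $j$-th smallest of $w(1),\dots,w(n)$. *)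

From HB Require Import structures.
From mathcomp Require Import all_boot all_order all_algebra all_fingroup.
Set Implicit Arguments. Unset Strict Implicit. Unset Printing Implicit Defensive.
Import Order.TTheory GRing.Theory Num.Theory.
Local Open Scope ring_scope.

Definition affine_perm (n : nat) (w : int -> int) : Prop :=
  bijective w /\
  (forall i : int, w (i + n%:Z) = w i + n%:Z) /\
  \sum_(1 <= i < n.+1) w (Posz i) = ('C(n.+1, 2))%:Z.

(* An instance of p (p : 'S_k, positions 0..k-1 standing for 1..k) in w:
   strictly increasing positions whose images are in the same relative
   order as p. *)
Definition is_instance (k : nat) (w : int -> int) (p : 'S_k) (pos : 'I_k -> int) : Prop :=
  (forall a b : 'I_k, (a < b)%N -> pos a < pos b) /\
  (forall a b : 'I_k, (w (pos a) < w (pos b)) = (p a < p b)%N).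

Definition window_rep (n : nat) (x : int) : int := ((x - 1) %% n%:Z)%Z + 1.

(* j such that w(q) is the j-th smallest of w(1),...,w(n) (1-based). *)
Definition window_rank (n : nat) (w : int -> int) (q : int) : nat :=
  #|[set r : 'I_n | w (Posz r.+1) <= w q]|.

Definition strand_assignment (n k : nat) (w : int -> int) (pos : 'I_k -> int) : 'I_k -> nat :=
  fun m => window_rank n w (window_rep n (pos m)).

From HB Require Import structures.
From mathcomp Require Import all_boot all_order all_algebra all_fingroup.
From mathcomp Require Import zify lra.
Set Implicit Arguments.
Unset Strict Implicit.
Unset Printing Implicit Defensive.

Import Order.TTheory GRing.Theory Num.Theory.
Local Open Scope ring_scope.

(* Write each position as x = q + a n with q in the window {1, ..., n}.
   Periodicity gives w x = w q + a n, and the window number a is weakly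
   increasing in x.  So if positions x < y have w y < w x, the window
   representatives satisfy w q_y < w q_x, i.e. the strand of y has a smaller
   rank than the strand of x: an inversion of p can only sit on strictly
   decreasing strands. *)

Section Periodicity.

Variables (d : int) (w : int -> int).
Hypothesis w_shift : forall x, w (x + d) = w x + d.

Lemma shift_mulrn (m : nat) x : w (x + d *+ m) = w x + d *+ m.
Proof.
elim: m x => [|m IHm] x; first by rewrite !mulr0n !addr0.
by rewrite mulrSr addrA w_shift IHm addrA.
Qed.

Lemma shift_mulz (a : int) x : w (x + a * d) = w x + a * d.
Proof.
case: a => m; first by rewrite -natz mulr_natl shift_mulrn.
have -> : Negz m * d = - (d *+ m.+1) by rewrite NegzE mulNr -natz mulr_natl.
by apply: (addIr (d *+ m.+1)); rewrite -shift_mulrn !subrK.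
Qed.

End Periodicity.

Definition window_num (n : nat) (x : int) : int := ((x - 1) %/ n%:Z)%Z.

Lemma window_rep_bounds (n : nat) x : (0 < n)%N -> 1 <= window_rep n x <= n%:Z.
Proof.
move=> n_gt0; have n_neq0 : n%:Z != 0 by rewrite eqz_nat -lt0n.
have := modz_ge0 (x - 1) n_neq0; have := ltz_pmod (x - 1) (n_gt0 : 0 < n%:Z).
rewrite /window_rep; lia.
Qed.

Lemma window_decomp (n : nat) x : x = window_rep n x + window_num n x * n%:Z.
Proof. by rewrite /window_rep /window_num addrAC [_ + _ * _]addrC -divz_eq subrK. Qed.

Lemma window_num_le (n : nat) x y : x <= y -> window_num n x <= window_num n y.
Proof. by move=> le_xy; apply: lez_pdiv2r; rewrite // lerB. Qed.

Lemma window_rank_lt (n : nat) (w : int -> int) (q q' : int) :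
  1 <= q <= n%:Z -> w q' < w q -> (window_rank n w q' < window_rank n w q)%N.
Proof.
move=> /andP[q_ge1 q_len] lt_w; rewrite /window_rank.
have q_idx : (`|q - 1|%N < n)%N by lia.
have q_eq : Posz `|q - 1|%N.+1 = q by lia.
apply: proper_card; apply/properP; split.
  by apply/subsetP=> r; rewrite !inE => /le_trans; apply; rewrite ltW.
by exists (Ordinal q_idx); rewrite !inE /= q_eq // -ltNge.
Qed.

Lemma inversion_strand_lt (n : nat) (w : int -> int) (x y : int) :
  (0 < n)%N -> (forall i, w (i + n%:Z) = w i + n%:Z) ->
  x < y -> w y < w x ->
  (window_rank n w (window_rep n y) < window_rank n w (window_rep n x))%N.
Proof.
move=> n_gt0 w_shift lt_xy lt_w; apply: window_rank_lt; first exact: window_rep_bounds.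
have decomp z : w z = w (window_rep n z) + window_num n z * n%:Z.
  by rewrite {1}(window_decomp n z) shift_mulz.
have le_num : window_num n x * n%:Z <= window_num n y * n%:Z.
  by rewrite ler_pM2r ?ltz_nat // window_num_le // ltW.
move: lt_w; rewrite (decomp x) (decomp y); lra.
Qed.

Theorem mainTheorem5 (n k : nat) (p : 'S_k) (pi : 'I_k -> nat) :
  (2 <= n)%N ->
  (forall m : 'I_k, (1 <= pi m <= n)%N) ->
  (exists i j : 'I_k, [/\ (i < j)%N, (p j < p i)%N & (pi i <= pi j)%N]) ->
  ~ (exists (w : int -> int) (pos : 'I_k -> int),
        [/\ affine_perm n w, is_instance w p pos &
            forall m : 'I_k, strand_assignment n w pos m = pi m]).
Proof.
move=> n_ge2 _ [i [j [lt_ij lt_pji le_piij]]].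
move=> [w [pos [[_ [w_shift _]] [pos_incr pos_order] strand_pi]]].
have lt_w : w (pos j) < w (pos i) by rewrite pos_order.
have := inversion_strand_lt (ltnW n_ge2) w_shift (pos_incr _ _ lt_ij) lt_w.
by rewrite -!/(strand_assignment n w pos _) !strand_pi ltnNge le_piij.
Qed.
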